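(* Let $G$ be a group, $A$ an additive abelian group with a right $G$-action by group automorphisms, and $n\in\mathbb Z_+$. For every $a\in\mathcal P_n(G,A)$, all values $[D^na](g_1,\dots,g_n)$ are $G$-invariant, i.e. $D^n(\mathcal P_n(G,A))\subseteq\mathcal C^n(G,A^G)$. Consequently the restriction $D^n|_{\mathcal P_n}:\mathcal P_n(G,A)\to\mathcal C^n(G,A^G)$ has kernel $\mathcal P_{n-1}(G,A)$ (for $n\ge1$), giving an exact sequence $0\to\mathcal P_{n-1}(G,A)\to\mathcal P_n(G,A)\to\mathcal C^n(G,A^G)$ and an injective homomorphism $\mathcal P_n(G,A)/\mathcal P_{n-1}(G,A)\hookrightarrow\mathcal C^n(G,A^G)$.
   Context: Right action: $a\mapsto a^g$, $a^{\mathbf e}=a$, $(a^g)^h=a^{gh}$, additive in $a$; $\mathbf e$ the identity. $A^G=\{a:a^g=a\ \forall g\}$. $\mathcal C^0(G,M)=M$ and for $n\ge1$, $\mathcal C^n(G,M)$ is the group of functions $G^n\to M$ vanishing whenever some argument is $\mathbf e$ (for $M=A$ or $M=A^G$). For $n\ge1$, $(d_nc)(g_1,\dots,g_n)=[c(g_1,\dots,g_{n-1})]^{g_n}-c(g_1,\dots,g_{n-1})$; $D^0=\mathrm{id}_A$, $D^n=d_nD^{n-1}$; $\mathcal P_n(G,A)=\ker D^{n+1}$. *)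

From mathcomp Require Import all_boot all_order all_algebra.
Set Implicit Arguments. Unset Strict Implicit. Unset Printing Implicit Defensive.
Import GRing.Theory.
Local Open Scope ring_scope.

Definition is_group (G : Type) (mul : G -> G -> G) (e : G) (inv : G -> G) : Prop :=
  [/\ (forall x y z, mul x (mul y z) = mul (mul x y) z),
      (forall x, mul e x = x), (forall x, mul x e = x),
      (forall x, mul (inv x) x = e) & (forall x, mul x (inv x) = e)].

Definition is_right_action (G : Type) (mul : G -> G -> G) (e : G)
    (A : zmodType) (act : A -> G -> A) : Prop :=
  [/\ (forall a, act a e = a),
      (forall a g h, act (act a g) h = act a (mul g h)) &
      (forall a b g, act (a + b) g = act a g + act b g)].

(* n-cochains are functions G^n -> A, with G^n represented as 'I_n -> G. *)
Fixpoint Dn (G : Type) (A : zmodType) (act : A -> G -> A) (n : nat)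
    (a : A) : ('I_n -> G) -> A :=
  match n with
  | 0 => fun _ => a
  | m.+1 => fun g : 'I_m.+1 -> G =>
      act (@Dn G A act m a (fun i => g (widen_ord (leqnSn m) i))) (g ord_max)
      - @Dn G A act m a (fun i => g (widen_ord (leqnSn m) i))
  end.
Arguments Dn {G A} act n a _.

Definition Pn (G : Type) (A : zmodType) (act : A -> G -> A) (n : nat) (a : A) : Prop :=
  forall g : 'I_n.+1 -> G, Dn act n.+1 a g = 0.

Definition invariant (G : Type) (A : zmodType) (act : A -> G -> A) (x : A) : Prop :=
  forall g, act x g = x.

Definition in_Cn_inv (G : Type) (e : G) (A : zmodType) (act : A -> G -> A)
    (n : nat) (c : ('I_n -> G) -> A) : Prop :=
  (forall g, invariant act (c g)) /\
  (forall g : 'I_n -> G, (exists i, g i = e) -> c g = 0).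

(* Unfolding one step of the recursion, [D^(n+1) a (g, x) = (D^n a g)^x - D^n a g].
   Hence [D^(n+1) a = 0] says exactly that every value of [D^n a] is fixed by every
   [x], and [D^n a = 0] forces [D^(n+1) a = 0] because the action fixes [0]; the
   values of [D^n a] vanish at arguments containing [e] because [e] acts trivially. *)
From Pilot Require Import Defs.
From mathcomp Require Import all_boot all_order all_algebra.
Set Implicit Arguments. Unset Strict Implicit. Unset Printing Implicit Defensive.
Import GRing.Theory.
Local Open Scope ring_scope.

Section HigherDifferences.

Variables (G : Type) (A : zmodType) (act : A -> G -> A).

Definition snoc n (h : 'I_n -> G) (x : G) : 'I_n.+1 -> G :=
  fun i => if insub (val i) is Some j then h j else x.

Lemma snoc_last n (h : 'I_n -> G) x : snoc h x ord_max = x.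
Proof. by rewrite /snoc insubF //= ltnn. Qed.

Lemma snoc_widen n (h : 'I_n -> G) x i : snoc h x (widen_ord (leqnSn n) i) = h i.
Proof. by rewrite /snoc insubT //= => lt_in; congr h; apply: val_inj. Qed.

Lemma eq_Dn n a (g g' : 'I_n -> G) : g =1 g' -> Dn act n a g = Dn act n a g'.
Proof.
elim: n g g' => [|n IHn] g g' eq_gg' //=.
by rewrite (IHn _ (fun i => g' (widen_ord (leqnSn n) i))) // eq_gg'.
Qed.

Lemma Dn_snoc n a (h : 'I_n -> G) x :
  Dn act n.+1 a (snoc h x) = act (Dn act n a h) x - Dn act n a h.
Proof. by rewrite /= snoc_last (@eq_Dn n a _ h) // => i; rewrite snoc_widen. Qed.

Hypothesis actD : forall a b g, act (a + b) g = act a g + act b g.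

Lemma act0 g : act 0 g = 0.
Proof. by apply: (@addrI _ (act 0 g)); rewrite -actD !addr0. Qed.

(* Qualified because [eqtype.invariant], imported after [Defs], shadows it. *)
Lemma Pn_invariant n a h : Pn act n a -> Defs.invariant act (Dn act n a h).
Proof. by move=> Pa x; apply/eqP; rewrite -subr_eq0 -Dn_snoc Pa. Qed.

Lemma Dn_eq0_Pn n a : (forall g, Dn act n a g = 0) -> Pn act n a.
Proof. by move=> Da0 g; rewrite /= Da0 act0 subrr. Qed.

Variable e : G.
Hypothesis act1 : forall a, act a e = a.

Lemma Dn_eq0_at_unit n a (g : 'I_n -> G) i : g i = e -> Dn act n a g = 0.
Proof.
elim: n a g i => [|n IHn] a g i gi_e; first by case: i gi_e.
case: (eqVneq i ord_max) gi_e => [-> gmax_e|i_neq_max gi_e].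
  by rewrite /= gmax_e act1 subrr.
have lt_in : (i < n)%N.
  rewrite ltn_neqAle -ltnS ltn_ord andbT.
  by apply: contraNneq i_neq_max => eq_in; apply/eqP/val_inj.
rewrite /= (IHn a _ (Ordinal lt_in)) ?act0 ?subrr //.
by rewrite -gi_e; congr g; apply: val_inj.
Qed.

End HigherDifferences.

Theorem lemma1p17 (G : Type) (mul : G -> G -> G) (e : G) (inv : G -> G)
  (A : zmodType) (act : A -> G -> A) :
  is_group mul e inv -> is_right_action mul e act ->
  (forall (n : nat) (a : A), Pn act n a -> in_Cn_inv e act (Dn act n a)) /\
  (forall (n : nat), (0 < n)%N ->
     forall a : A, (Pn act n a /\ (forall g, Dn act n a g = 0)) <-> Pn act n.-1 a).
Proof.
move=> _ [act1 _ actD]; split.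
  move=> n a Pa; split=> [h|g [i gi_e]]; first exact: Pn_invariant.
  exact: Dn_eq0_at_unit gi_e.
case=> // n _ a; split=> [[] //|Pa].
by split=> //; apply: Dn_eq0_Pn.
Qed.
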